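(* The category $\mathcal O$ is a full subcategory of the category $\mathcal C^{hi}$; that is, every $\mathbf U(\infty)$-module in $\mathcal O$ lies in $\mathcal C^{hi}$.
   Context: $v$ indeterminate. $\mathbf U(\infty)$ is the $\mathbb Q(v)$-algebra with generators $E_i,F_i,K_i,K_i^{-1}$ ($i\in\mathbb Z$) and relations: $K_iK_j=K_jK_i$, $K_iK_i^{-1}=1$; $K_iE_j=v^{\delta_{i,j}-\delta_{i,j+1}}E_jK_i$; $K_iF_j=v^{\delta_{i,j+1}-\delta_{i,j}}F_jK_i$; $E_iE_j=E_jE_i$, $F_iF_j=F_jF_i$ if $|i-j|>1$; $E_iF_j-F_jE_i=\delta_{i,j}\frac{\widetilde K_i-\widetilde K_i^{-1}}{v-v^{-1}}$, $\widetilde K_i=K_iK_{i+1}^{-1}$; $E_i^2E_j-(v+v^{-1})E_iE_jE_i+E_jE_i^2=0$ and likewise for $F$ if $|i-j|=1$. $X(\infty)$ is the set of all integer sequences $\lambda=(\lambda_i)_{i\in\mathbb Z}$; $\alpha_i=\varepsilon_i-\varepsilon_{i+1}$ ($\varepsilon_i$ the unit sequence); $\mu\le_{wt}\lambda$ iff $\lambda-\mu$ is a finite $\mathbb N$-linear combination of the $\alpha_i$; $(-\infty,\lambda]=\{\mu:\mu\le_{wt}\lambda\}$. For a $\mathbf U(\infty)$-module $M$, $M_\lambda=\{x:K_ix=v^{\lambda_i}x\ \forall i\}$, $\mathrm{wt}(M)=\{\lambda:M_\lambda\ne0\}$; weight module: $M=\bigoplus_\lambda M_\lambda$. $\mathcal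 C^{hi}$: the full subcategory of weight modules $M$ such that for each $x\in M$ there is $n_0$ with $ux=0$ for every monomial $u$ in the $E_i$'s with at least $n_0$ factors. $\mathcal O$: the full subcategory of weight modules with finite-dimensional weight spaces for which there exist finitely many $\lambda^{(1)},\dots,\lambda^{(s)}\in X(\infty)$ with $\mathrm{wt}(M)\subseteq\bigcup_k(-\infty,\lambda^{(k)}]$. *)

From HB Require Import structures.
From mathcomp Require Import all_boot all_order all_algebra.
From Stdlib Require List.
Set Implicit Arguments. Unset Strict Implicit. Unset Printing Implicit Defensive.
Import Order.TTheory GRing.Theory Num.Theory.
Local Open Scope ring_scope.

Definition Qv : fieldType := {fraction {poly rat}}.
Definition qv : Qv := tofrac ('X : {poly rat}).

Definition kdelta (i j : int) : int := if i == j then 1 else 0.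

(* A U(infinity)-module: a Q(v)-vector space M together with Q(v)-linear
   operators E_i, F_i, K_i, K_i^{-1} (i in Z) satisfying the defining
   relations of U(infinity). *)
Definition lin_op (M : lmodType Qv) (f : M -> M) : Prop :=
  forall (a : Qv) (x y : M), f (a *: x + y) = a *: f x + f y.

Definition is_Uinf_module (M : lmodType Qv) (E F K Ki : int -> M -> M) : Prop :=
  (forall i, lin_op (E i) /\ lin_op (F i) /\ lin_op (K i) /\ lin_op (Ki i)) /\
      (forall i j x, K i (K j x) = K j (K i x)) /\
      (forall i x, K i (Ki i x) = x /\ Ki i (K i x) = x) /\
      (forall i j x, K i (E j x) = qv ^ (kdelta i j - kdelta i (j + 1)) *: E j (K i x)) /\
      (forall i j x, K i (F j x) = qv ^ (kdelta i (j + 1) - kdelta i j) *: F j (K i x)) /\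
      (forall i j x, (1 < absz (i - j))%N ->
         E i (E j x) = E j (E i x) /\ F i (F j x) = F j (F i x)) /\
      (forall i j x, E i (F j x) - F j (E i x) =
         if i == j then (qv - qv^-1)^-1 *: (K i (Ki (i + 1) x) - Ki i (K (i + 1) x))
         else 0) /\
    (forall i j x, absz (i - j) = 1%N ->
         E i (E i (E j x)) - (qv + qv^-1) *: E i (E j (E i x)) + E j (E i (E i x)) = 0
         /\ F i (F i (F j x)) - (qv + qv^-1) *: F i (F j (F i x)) + F j (F i (F i x)) = 0).

Definition weight := int -> int.

Definition alpha (i : int) : weight := fun j => kdelta j i - kdelta j (i + 1).

(* mu <=_wt lambda : lambda - mu is a finite N-linear combination of alpha_i
   (a finite list of indices, with repetitions). *)
Definition wt_le (mu lam : weight) : Prop :=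
  exists s : seq int, forall j, lam j - mu j = \sum_(i <- s) alpha i j.

Definition in_wspace (M : lmodType Qv) (K : int -> M -> M) (lam : weight) (x : M) : Prop :=
  forall i, K i x = qv ^ (lam i) *: x.

Definition in_wt (M : lmodType Qv) (K : int -> M -> M) (lam : weight) : Prop :=
  exists x : M, x != 0 /\ in_wspace K lam x.

(* weight module: M is the sum of its weight spaces (every element is a finite
   sum of weight vectors; the sum is automatically direct). *)
Definition weight_module (M : lmodType Qv) (K : int -> M -> M) : Prop :=
  forall x : M, exists s : seq (weight * M),
    List.Forall (fun p : weight * M => in_wspace K p.1 p.2) s /\ x = \sum_(p <- s) p.2.

Definition fin_dim_wspaces (M : lmodType Qv) (K : int -> M -> M) : Prop :=
  forall lam : weight, exists (n : nat) (b : 'I_n -> M),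
    (forall k, in_wspace K lam (b k)) /\
    (forall x, in_wspace K lam x -> exists c : 'I_n -> Qv, x = \sum_(k < n) c k *: b k).

Definition applyE (M : lmodType Qv) (E : int -> M -> M) (s : seq int) (x : M) : M :=
  foldr (fun i y => E i y) x s.

Definition in_Chi (M : lmodType Qv) (E K : int -> M -> M) : Prop :=
  weight_module K /\
  forall x : M, exists n0 : nat, forall s : seq int, (n0 <= size s)%N -> applyE E s x = 0.

Definition in_O (M : lmodType Qv) (K : int -> M -> M) : Prop :=
  [/\ weight_module K, fin_dim_wspaces K &
      exists ls : seq weight, forall lam, in_wt K lam ->
        List.Exists (fun l => wt_le lam l) ls].

From mathcomp Require Import all_boot all_order all_algebra zify ring.
From Stdlib Require Import Classical_Prop.
Set Implicit Arguments. Unset Strict Implicit. Unset Printing Implicit Defensive.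
Import Order.TTheory GRing.Theory Num.Theory.
Local Open Scope ring_scope.

(* A monomial E_{i_1} ... E_{i_n} raises a weight vector of weight mu to weight
   mu + alpha_{i_1} + ... + alpha_{i_n}.  The height of a root sum (pair it with
   the weight j |-> -j) is the number n of simple roots, so it determines n.  If
   mu + alpha_{i_1} + ... + alpha_{i_n} <=_wt lambda, then lambda - mu is a sum of
   n + m simple roots, hence n is bounded by the height of lambda - mu.  With
   finitely many lambda's in category O, every weight vector, and so every
   element, is killed by all long enough E-monomials. *)

Definition root_sum (s : seq int) : weight := fun j => \sum_(i <- s) alpha i j.

Lemma root_sum_cat (s t : seq int) j : root_sum (s ++ t) j = root_sum s j + root_sum t j.
Proof. by rewrite /root_sum big_cat. Qed.

Lemma sum_mul_kdelta (r : seq int) (f : int -> int) i : uniq r -> i \in r ->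
  \sum_(j <- r) f j * kdelta j i = f i.
Proof.
move=> ur ir; rewrite (bigD1_seq i) //= /kdelta eqxx mulr1 big1 ?addr0 //.
by move=> j /negPf ->; rewrite mulr0.
Qed.

Lemma height_root_sum (r s : seq int) : uniq r ->
  (forall i, i \in s -> (i \in r) && (i + 1 \in r)) ->
  \sum_(j <- r) (- j) * root_sum s j = (size s)%:R.
Proof.
move=> ur; elim: s => [|i s IH] sr.
  by rewrite big1 // => j _; rewrite /root_sum big_nil mulr0.
have /andP [ir i1r] := sr i (mem_head _ _).
have -> : \sum_(j <- r) (- j) * root_sum (i :: s) j =
    \sum_(j <- r) (- j) * kdelta j i - \sum_(j <- r) (- j) * kdelta j (i + 1)
  + \sum_(j <- r) (- j) * root_sum s j.
  rewrite -sumrB -big_split /=; apply: eq_bigr => j _.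
  by rewrite /root_sum big_cons /alpha mulrDr mulrBr.
rewrite !(sum_mul_kdelta (fun j => - j)) // IH => [|k ks]; last first.
  by apply: sr; rewrite in_cons ks orbT.
by rewrite /= -add1n natrD; congr (_ + _); lia.
Qed.

Lemma root_sum_size_eq (s t : seq int) :
  (forall j, root_sum s j = root_sum t j) -> size s = size t.
Proof.
move=> eq_st.
pose r := undup ((s ++ t) ++ map (fun i => i + 1) (s ++ t)).
have sub_r (u : seq int) : {subset u <= s ++ t} -> forall i, i \in u -> (i \in r) && (i + 1 \in r).
  move=> ust i iu; have ist := ust i iu.
  by rewrite !mem_undup !(mem_cat _ (s ++ t)) ist (map_f _ ist) orbT.
have hs := height_root_sum (undup_uniq _) (sub_r s (mem_subseq (prefix_subseq s t))).
have ht := height_root_sum (undup_uniq _) (sub_r t (mem_subseq (suffix_subseq s t))).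
apply/eqP; rewrite -(eqr_nat int) -hs -ht; apply/eqP.
by apply: eq_bigr => j _; rewrite eq_st.
Qed.

Section WeightOrder.

Variables (mu lam : weight).

Lemma wt_le_of_raised (s : seq int) :
  wt_le (fun j => mu j + root_sum s j) lam -> wt_le mu lam.
Proof.
case=> u Hu; exists (s ++ u) => j.
by rewrite big_cat -Hu /root_sum /=; ring.
Qed.

Lemma raised_size_le (t s : seq int) :
  (forall j, lam j - mu j = root_sum t j) ->
  wt_le (fun j => mu j + root_sum s j) lam -> (size s <= size t)%N.
Proof.
move=> Ht [u Hu]; have <- : size (s ++ u) = size t.
  by apply: root_sum_size_eq => j; rewrite root_sum_cat -Ht {2}/root_sum -Hu /=; ring.
by rewrite size_cat leq_addr.
Qed.

End WeightOrder.

Lemma raised_size_bounded (ls : seq weight) (mu : weight) : exists N : nat,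
  forall l s, List.In l ls -> wt_le (fun j => mu j + root_sum s j) l -> (size s <= N)%N.
Proof.
elim: ls => [|l ls [N IH]]; first by exists 0%N.
have [[t Ht]|not_le] := classic (wt_le mu l).
  exists (maxn N (size t)) => l' s [<-|l'ls] le_l'.
    by rewrite leq_max (raised_size_le Ht le_l') orbT.
  by rewrite leq_max (IH l' s l'ls le_l').
exists N => l' s [<-|l'ls] le_l'; last exact: IH l'ls le_l'.
by case: not_le; apply: wt_le_of_raised le_l'.
Qed.

Section LinearOp.

Variables (M : lmodType Qv) (f : M -> M).
Hypothesis lin_f : lin_op f.

Lemma lin_op0 : f 0 = 0.
Proof.
have := lin_f 1 0 0; rewrite !scale1r addr0 => e.
by apply: (addrI (f 0)); rewrite addr0 -e.
Qed.

Lemma lin_opZ a x : f (a *: x) = a *: f x.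
Proof. by rewrite -[a *: x]addr0 lin_f lin_op0 addr0. Qed.

Lemma lin_opD x y : f (x + y) = f x + f y.
Proof. by rewrite -[x]scale1r lin_f !scale1r. Qed.

End LinearOp.

Section RaisingMonomials.

Variables (M : lmodType Qv) (E K : int -> M -> M).
Hypothesis lin_E : forall i, lin_op (E i).
Hypothesis K_E : forall i j x,
  K i (E j x) = qv ^ (kdelta i j - kdelta i (j + 1)) *: E j (K i x).

Lemma applyE0 s : applyE E s 0 = 0.
Proof. by elim: s => //= i s ->; rewrite lin_op0. Qed.

Lemma applyE_sum s (r : seq (weight * M)) :
  applyE E s (\sum_(p <- r) p.2) = \sum_(p <- r) applyE E s p.2.
Proof.
have applyED t a b : applyE E t (a + b) = applyE E t a + applyE E t b.
  by elim: t a b => //= i t IH a b; rewrite IH lin_opD.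
elim: r => [|p r IH]; first by rewrite !big_nil applyE0.
by rewrite !big_cons applyED IH.
Qed.

Lemma applyE_wspace (mu : weight) y s : in_wspace K mu y ->
  in_wspace K (fun j => mu j + root_sum s j) (applyE E s y).
Proof.
have qv_unit : qv \is a GRing.unit by rewrite unitfE tofrac_eq0 polyX_eq0.
move=> y_mu; elim: s => [|i s IH] j /=.
  by rewrite /root_sum big_nil addr0; apply: y_mu.
rewrite K_E IH lin_opZ // scalerA -exprzDr // /root_sum big_cons /alpha.
by congr (_ ^ _ *: _); ring.
Qed.

Lemma applyE_wvec_eventually0 (ls : seq weight) (mu : weight) y :
  (forall lam, in_wt K lam -> List.Exists (fun l => wt_le lam l) ls) ->
  in_wspace K mu y ->
  exists N : nat, forall s, (N < size s)%N -> applyE E s y = 0.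
Proof.
move=> bounded y_mu; have [N HN] := raised_size_bounded ls mu.
exists N => s long_s; apply/eqP/negP => /negP nz.
have /List.Exists_exists [l [l_ls le_l]] :=
  bounded _ (ex_intro _ _ (conj nz (applyE_wspace s y_mu))).
by rewrite ltnNge (HN l s) in long_s.
Qed.

Lemma applyE_sum_eventually0 (r : seq (weight * M)) :
  (forall p, List.In p r -> exists N : nat, forall s, (N < size s)%N -> applyE E s p.2 = 0) ->
  exists N : nat, forall s, (N < size s)%N -> applyE E s (\sum_(p <- r) p.2) = 0.
Proof.
elim: r => [|p r IH] nil_r.
  by exists 0%N => s _; rewrite big_nil applyE0.
have [Np Hp] := nil_r p (or_introl erefl).
have [Nr Hr] := IH (fun q qr => nil_r q (or_intror qr)).
exists (maxn Np Nr) => s; rewrite gtn_max => /andP [lt_p lt_r].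
by rewrite applyE_sum big_cons Hp // add0r -applyE_sum Hr.
Qed.

End RaisingMonomials.

Theorem proposition9p2 (M : lmodType Qv) (E F K Ki : int -> M -> M) :
  is_Uinf_module E F K Ki -> in_O K -> in_Chi E K.
Proof.
move=> [lin [_ [_ [K_E _]]]] [wm _ [ls bounded]].
have lin_E i : lin_op (E i) by case: (lin i).
split=> // x; have [r [r_wt ->]] := wm x.
have [N HN] := applyE_sum_eventually0 lin_E (r := r) (fun p p_r =>
  applyE_wvec_eventually0 lin_E K_E bounded (proj1 (List.Forall_forall _ _) r_wt p p_r)).
by exists N.+1 => s; apply: HN.
Qed.
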